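(* For $n\geq0$ let $$D_n=\Big\{F:\mathbb{C}\to\mathbb{C}\text{ additive}\ \Big|\ F(\alpha^{n+1})=\sum_{i=1}^{n}\binom{n+1}{i}(-1)^{n-i}\,\alpha^{n+1-i}\,F(\alpha^i)\text{ for all }\alpha\in\mathbb{C}\Big\}$$ (so $D_0=\{0\}$ and $D_1$ is the set of derivations of $\mathbb{C}$). Then for every $n\geq1$, $D_n\subseteq D_{n+1}$. Moreover, if $D$ is a non-trivial derivation on $\mathbb{C}$, then the $(n+1)$-fold composition $D^{n+1}=D\circ\cdots\circ D$ belongs to $D_{n+1}\setminus D_n$.
   Context: A derivation on $\mathbb{C}$ is an additive map $D:\mathbb{C}\to\mathbb{C}$ with $D(xy)=xD(y)+yD(x)$. *)

From HB Require Import structures.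
From mathcomp Require Import all_boot all_order all_algebra.
From mathcomp Require Import complex.
From mathcomp Require Import reals Rstruct.
Set Implicit Arguments. Unset Strict Implicit. Unset Printing Implicit Defensive.
Import Order.TTheory GRing.Theory Num.Theory.
Local Open Scope ring_scope.

Definition CC : Type := (Rdefinitions.R)[i].

Definition additive_map (F : CC -> CC) : Prop :=
  forall x y : CC, F (x + y) = F x + F y.

Definition derivation (D : CC -> CC) : Prop :=
  additive_map D /\ forall x y : CC, D (x * y) = x * D y + y * D x.

Definition in_Dn (n : nat) (F : CC -> CC) : Prop :=
  additive_map F /\
  forall a : CC,
    F (a ^+ n.+1) =
    \sum_(1 <= i < n.+1)
       ('C(n.+1, i)%:R * (-1) ^+ (n - i) * a ^+ (n.+1 - i) * F (a ^+ i)).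

From mathcomp Require Import all_boot all_order all_algebra.
From mathcomp Require Import complex.
From mathcomp Require Import reals Rstruct.
From mathcomp Require Import ring.
Import Order.TTheory GRing.Theory Num.Theory.
Local Open Scope ring_scope.

(* For a ring element a and a map L, let  ad a L := x |-> L (a x) - a L x.
   Expanding (ad a)^(k+1) F at 1 by the binomial formula shows that, for an
   additive F with F 1 = 0, membership of F in D_k is exactly the identity
   (ad a)^(k+1) F 1 = 0 for every a.

   Inclusion D_n ⊆ D_(n+1): the operators ad a and ad b commute.  Lifting F
   coefficientwise to polynomials and evaluating at the integers shows that
   t |-> (ad (a + b t))^(n+1) F 1 is a polynomial vanishing at every natural
   number, hence zero; its coefficient of t is (n+1) (ad a)^n (ad b F) 1.  With
   b = a^2 and the identity ad (a^2) = (ad a)^2 + 2 a ad a this yields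
   (ad a)^(n+2) F 1 = 0.

   Powers of a derivation D: (ad a)^j (D^j) is multiplication by j! (D a)^j,
   so (ad a)^(j+1) (D^j) = 0, which gives D^(n+1) ∈ D_(n+1), while choosing a
   with D a ≠ 0 gives D^(n+1) ∉ D_n. *)

Definition additive_fun {V : zmodType} (L : V -> V) : Prop :=
  forall x y, L (x + y) = L x + L y.

Section AdditiveMaps.
Context {V : zmodType}.
Implicit Types L : V -> V.

Lemma additive_fun0 {L} : additive_fun L -> L 0 = 0.
Proof. by move=> La; apply/(addrI (L 0)); rewrite -(La _ _) !addr0. Qed.

Lemma additive_funN {L} : additive_fun L -> forall x, L (- x) = - L x.
Proof.
by move=> La x; apply/(addrI (L x)); rewrite -(La _ _) !subrr (additive_fun0 La).
Qed.

Lemma additive_fun_natmul {L} y N : additive_fun L -> L (y *+ N) = L y *+ N.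
Proof.
move=> La; elim: N => [|N IH]; first by rewrite !mulr0n (additive_fun0 La).
by rewrite !mulrS (La _ _) IH.
Qed.

Lemma additive_fun_iter {L} k : additive_fun L -> additive_fun (iter k L).
Proof. by move=> La; elim: k => [|k IH] x y //=; rewrite IH (La _ _). Qed.

End AdditiveMaps.

Section AdjointAction.
Context {R : comPzRingType}.
Implicit Types (a b c x : R) (L M : R -> R).

Definition ad a L : R -> R := fun x => L (a * x) - a * L x.

Lemma iter_adS a k L x :
  iter k.+1 (ad a) L x = iter k (ad a) L (a * x) - a * iter k (ad a) L x.
Proof. by []. Qed.

Lemma iter_ad_ext a L M m :
  (forall y, L y = M y) -> forall x, iter m (ad a) L x = iter m (ad a) M x.
Proof. by move=> E; elim: m => [|m IH] x //=; rewrite /ad !IH. Qed.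

Lemma iter_ad_lin a c L M m x :
  iter m (ad a) (fun y => L y + c * M y) x =
  iter m (ad a) L x + c * iter m (ad a) M x.
Proof. by elim: m x => [|m IH] x //; rewrite !iter_adS !IH; ring. Qed.

Lemma iter_ad_comm a b L k x :
  iter k (ad a) (ad b L) x = ad b (iter k (ad a) L) x.
Proof.
elim: k x => [|k IH] x //.
rewrite iter_adS !IH /ad /= (mulrCA a b x); ring.
Qed.

Lemma additive_ad a {L} : additive_fun L -> additive_fun (ad a L).
Proof. by move=> La x y; rewrite /ad mulrDr !(La _ _) mulrDr; ring. Qed.

Lemma additive_iter_ad a k {L} : additive_fun L -> additive_fun (iter k (ad a) L).
Proof. by move=> La; elim: k => [|k IH] //=; apply: additive_ad. Qed.

Lemma iter_ad_expand a L m x :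
  iter m (ad a) L x =
  \sum_(i < m.+1) 'C(m, i)%:R * (- a) ^+ (m - i) * L (a ^+ i * x).
Proof.
elim: m x => [|m IH] x; first by rewrite big_ord1 bin0 subnn !expr0 !mul1r.
rewrite iter_adS !IH [RHS]big_ord_recl bin0 subn0 expr0 mul1r.
(* Pascal's rule splits the shifted sum into two sums of binomials of m. *)
have -> : \sum_(i < m.+1) 'C(m.+1, bump 0 i)%:R * (- a) ^+ (m.+1 - bump 0 i)
            * L (a ^+ bump 0 i * x) =
    \sum_(i < m.+1) 'C(m, i)%:R * (- a) ^+ (m - i) * L (a ^+ i * (a * x)) +
    \sum_(i < m.+1) 'C(m, i.+1)%:R * (- a) ^+ (m - i) * L (a ^+ i.+1 * x).
  rewrite -big_split; apply: eq_bigr => i _ /=.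
  rewrite /bump /= add1n binS natrD subSS exprSr -(mulrA _ a x); ring.
rewrite addrCA; congr (_ + _).
rewrite [X in _ = _ + X]big_ord_recr /= bin_small // !mul0r addr0.
have -> : \sum_(i < m) 'C(m, i.+1)%:R * (- a) ^+ (m - i) * L (a ^+ i.+1 * x)
  = \sum_(i < m) - (a * ('C(m, bump 0 i)%:R * (- a) ^+ (m - bump 0 i)
                         * L (a ^+ bump 0 i * x))).
  apply: eq_bigr => i _; rewrite /bump /= add1n.
  by rewrite -(subnSK (ltn_ord i)) exprS; ring.
rewrite mulr_sumr -sumrN [LHS]big_ord_recl /= bin0 subn0 expr0.
by congr (_ + _); rewrite !mul1r exprS !mulNr mulrA.
Qed.

(* At the point 1 the expansion is the defect of the identity defining D_k. *)
Lemma iter_ad_at1 F k a :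
  iter k.+1 (ad a) F 1 = F (a ^+ k.+1) -
   \sum_(1 <= i < k.+1)
       ('C(k.+1, i)%:R * (-1) ^+ (k - i) * a ^+ (k.+1 - i) * F (a ^+ i))
   + (- a) ^+ k.+1 * F 1.
Proof.
rewrite iter_ad_expand big_ord_recl big_ord_recr /= bin0 subn0 binn subnn.
rewrite big_add1 /= big_mkord !expr0 !mulr1 !mul1r.
set S := \sum_(i < k) _.
have -> : S = - \sum_(i < k) 'C(k.+1, i.+1)%:R * (-1) ^+ (k - i.+1) *
     a ^+ (k.+1 - i.+1) * F (a ^+ i.+1).
  rewrite /S -sumrN; apply: eq_bigr => i _.
  rewrite /bump /= !add1n !subSS mulr1 -(subnSK (ltn_ord i)).
  by rewrite !exprS (exprNn a); ring.
by rewrite /bump /= add1n; ring.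
Qed.

Lemma ad_sqr a L x : ad (a ^+ 2) L x = ad a (ad a L) x + 2%:R * a * ad a L x.
Proof. by rewrite /ad expr2 -!mulrA; ring. Qed.

End AdjointAction.

Section Polarization.
Variable R : numDomainType.
Variable F : R -> R.
Hypothesis F_additive : additive_fun F.

Definition poly_lift (p : {poly R}) : {poly R} := \poly_(i < size p) F p`_i.

Lemma poly_lift_coef p i : (poly_lift p)`_i = F p`_i.
Proof.
rewrite coef_poly; case: ltnP => // Hi.
by rewrite nth_default // (additive_fun0 F_additive).
Qed.

(* Since F is additive it commutes with evaluation at natural numbers. *)
Lemma poly_lift_horner p (m : nat) : (poly_lift p).[m%:R] = F p.[m%:R].
Proof.
rewrite horner_poly horner_coef.
rewrite (big_morph F F_additive (additive_fun0 F_additive)).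
apply: eq_bigr => i _.
by rewrite -natrX !mulr_natr (additive_fun_natmul _ _ F_additive).
Qed.

Definition linpoly (a b : R) : {poly R} := a%:P + b%:P * 'X.

Lemma linpoly_coef0 a b p : (linpoly a b * p)`_0 = a * p`_0.
Proof.
by rewrite /linpoly mulrDl -mulrA (mulrC 'X) coefD !coefCM coefMX mulr0 addr0.
Qed.

Lemma linpoly_coef1 a b p : (linpoly a b * p)`_1 = a * p`_1 + b * p`_0.
Proof. by rewrite /linpoly mulrDl -mulrA (mulrC 'X) coefD !coefCM coefMX. Qed.

Lemma iter_ad_linpoly_horner a b k p (m : nat) :
  (iter k (ad (linpoly a b)) poly_lift p).[m%:R] =
  iter k (ad (a + b * m%:R)) F p.[m%:R].
Proof.
elim: k p => [|k IH] p /=; first exact: poly_lift_horner.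
rewrite /ad hornerD hornerN hornerM !IH hornerM.
by rewrite /linpoly hornerD hornerC hornerM hornerC hornerX.
Qed.

Lemma iter_ad_linpoly_coefs a b k p :
  (iter k (ad (linpoly a b)) poly_lift p)`_0 = iter k (ad a) F p`_0 /\
  (iter k (ad (linpoly a b)) poly_lift p)`_1 =
     iter k (ad a) F p`_1 + k%:R * iter k.-1 (ad a) (ad b F) p`_0.
Proof.
elim: k p => [|k IH] p; first by rewrite /= !poly_lift_coef mul0r addr0.
have [IH0 IH1] := IH p; have [IHA0 IHA1] := IH (linpoly a b * p).
rewrite !iter_adS !coefB !linpoly_coef0 !linpoly_coef1 IH0 IH1 IHA0 IHA1.
rewrite !linpoly_coef0 !linpoly_coef1.
split => //.
have La := additive_iter_ad a k F_additive.
have C x : iter k (ad a) (ad b F) x =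
           iter k (ad a) F (b * x) - b * iter k (ad a) F x by rewrite iter_ad_comm.
rewrite La.
case: k {IH IH0 IH1 IHA0 IHA1} La C => [|k] La C.
  by rewrite /= mul0r !addr0 /ad; ring.
rewrite [k.+1.-1]/= [k.+2%:R]mulrSr mulrDl mul1r {2}C (iter_adS a k (ad b F)); ring.
Qed.

Lemma iter_ad_polarize n :
  (forall c, iter n.+1 (ad c) F 1 = 0) ->
  forall a b, iter n (ad a) (ad b F) 1 = 0.
Proof.
move=> Fn a b.
set q := iter n.+1 (ad (linpoly a b)) poly_lift 1.
have q0 : q = 0.
  apply/eqP; apply/negPn/negP => q_neq0.
  have q_roots : all (root q) [seq i%:R | i <- iota 0 (size q)].
    apply/allP => x /mapP [i _ ->].
    by rewrite /root /q iter_ad_linpoly_horner hornerC Fn.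
  have nat_uniq : uniq [seq i%:R : R | i <- iota 0 (size q)].
    by rewrite map_inj_uniq ?iota_uniq // => i j /eqP; rewrite eqr_nat => /eqP.
  have := max_poly_roots q_neq0 q_roots nat_uniq.
  by rewrite size_map size_iota ltnn.
have [_] := iter_ad_linpoly_coefs a b n.+1 1.
rewrite -/q q0 coef0 coef1 /= coef1 /=.
rewrite (additive_fun0 (additive_ad a (additive_iter_ad a n F_additive))) add0r.
by move/esym/eqP; rewrite mulf_eq0 pnatr_eq0 => /eqP.
Qed.

Lemma iter_ad_vanish_succ n :
  (forall c, iter n.+1 (ad c) F 1 = 0) -> forall a, iter n.+2 (ad a) F 1 = 0.
Proof.
move=> Fn a.
have sq := iter_ad_polarize n Fn a (a ^+ 2).
have Fn_a : ad a (iter n (ad a) F) 1 = 0 := Fn a.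
by move: sq; rewrite iter_ad_comm ad_sqr Fn_a mulr0 addr0.
Qed.

End Polarization.

Section DerivationPowers.
Context {R : comPzRingType}.
Variable D : R -> R.
Hypothesis D_additive : additive_fun D.
Hypothesis D_Leibniz : forall x y, D (x * y) = x * D y + y * D x.

Lemma derivation1 : D 1 = 0.
Proof.
have := D_Leibniz 1 1; rewrite !mul1r => /(congr1 (fun z => z - D 1)).
by rewrite subrr addrK.
Qed.

Lemma iter_derivation1 k : iter k.+1 D 1 = 0.
Proof.
elim: k => [|k IH]; first exact: derivation1.
by rewrite iterS IH (additive_fun0 D_additive).
Qed.

Lemma iter_ad_derivation a M m x :
  iter m.+1 (ad a) (fun y => D (M y)) x =
  iter m (ad a) (fun y => D (ad a M y)) x + D a * iter m (ad a) M x.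
Proof.
rewrite iterSr -iter_ad_lin; apply: iter_ad_ext => y.
by rewrite /ad D_additive (additive_funN D_additive) D_Leibniz; ring.
Qed.

Lemma iter_ad_derivation_scalar a k M c :
  (forall x, iter k (ad a) M x = c * x) ->
  forall x, iter k.+1 (ad a) (fun y => D (M y)) x = k.+1%:R * D a * c * x.
Proof.
elim: k M c => [|k IH] M c HM x.
  have M_scalar y : M y = c * y := HM y.
  by rewrite /= /ad !M_scalar !D_Leibniz; ring.
have HadM y : iter k (ad a) (ad a M) y = c * y by rewrite -iterSr HM.
by rewrite iter_ad_derivation (IH _ c HadM) HM mulrSr; ring.
Qed.

Lemma iter_ad_iter_derivation a j x :
  iter j (ad a) (iter j D) x = j`!%:R * D a ^+ j * x.
Proof.
elim: j x => [|j IH] x; first by rewrite /= !mul1r.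
rewrite (iter_ad_derivation_scalar _ _ _ _ IH) factS natrM exprS; ring.
Qed.

Lemma iter_ad_iter_derivation_succ a j x : iter j.+1 (ad a) (iter j D) x = 0.
Proof. by rewrite iter_adS !iter_ad_iter_derivation; ring. Qed.

End DerivationPowers.

(* Every element of D_k vanishes at 1 (take a = 1 in the defining identity). *)
Lemma in_Dn_at1 {k F} : in_Dn k F -> F 1 = 0.
Proof.
move=> [_ HF]; have := iter_ad_at1 F k 1.
rewrite iter_adS !mul1r subrr HF subrr add0r => /esym/eqP.
by rewrite mulf_eq0 expf_eq0 oppr_eq0 oner_eq0 andbF => /eqP.
Qed.

Lemma in_Dn_iter_ad k {F} : additive_map F -> F 1 = 0 ->
  (in_Dn k F <-> forall a, iter k.+1 (ad a) F 1 = 0).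
Proof.
move=> F_additive F1; split.
  by move=> [_ HF] a; rewrite iter_ad_at1 HF F1 mulr0 subrr addr0.
move=> HF; split => // a; apply/eqP; rewrite -subr_eq0; apply/eqP.
by have := iter_ad_at1 F k a; rewrite HF F1 mulr0 addr0 => <-.
Qed.

Theorem proposition4p4 :
  (forall (n : nat), (1 <= n)%N ->
     forall F : CC -> CC, in_Dn n F -> in_Dn n.+1 F) /\
  (forall (D : CC -> CC), derivation D -> (exists x : CC, D x <> 0) ->
     forall (n : nat), (1 <= n)%N ->
       in_Dn n.+1 (iter n.+1 D) /\ ~ in_Dn n (iter n.+1 D)).
Proof.
split.
  move=> n _ F HF; have F1 := in_Dn_at1 HF; have F_additive := HF.1.
  apply/(in_Dn_iter_ad n.+1 F_additive F1).
  exact/iter_ad_vanish_succ/(in_Dn_iter_ad n F_additive F1).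
move=> D [D_additive D_Leibniz] [x0 Dx0] n _.
have Dn_additive := additive_fun_iter n.+1 D_additive.
have Dn1 := iter_derivation1 _ D_additive D_Leibniz n.
split.
  apply/(in_Dn_iter_ad n.+1 Dn_additive Dn1) => a.
  exact: iter_ad_iter_derivation_succ.
move/(in_Dn_iter_ad n Dn_additive Dn1)/(_ x0).
rewrite iter_ad_iter_derivation // mulr1 => /eqP.
by rewrite mulf_eq0 pnatr_eq0 eqn0Ngt fact_gt0 expf_eq0 => /eqP.
Qed.
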